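(* Let $(S,\cdot,\mathfrak{m})$ be a measurable semigroup and let $*$ be the extended operation on $\mathfrak{m}^\beta$. Then $*$ is associative, and $(\mathfrak{m}^\beta,* )$ is a compact Hausdorff right topological semigroup (i.e. $p\mapsto p*q$ is continuous for every $q\in\mathfrak{m}^\beta$).
   Context: A measurable semigroup is a triple $(S,\cdot,\mathfrak{m})$ where $(S,\cdot)$ is a semigroup, $\mathfrak{m}$ is an infinite $\sigma$-algebra on $S$ containing every finite subset of $S$, and $\pi:S\times S\to S$, $\pi(x,y)=xy$, is $(\mathfrak{m}\otimes\mathfrak{m},\mathfrak{m})$-measurable. An $\mathfrak{m}$-filter is a family $p\subseteq\mathfrak{m}$ with $\emptyset\notin p$, $S\in p$, closed under supersets belonging to $\mathfrak{m}$ and under finite intersections; an $\mathfrak{m}$-ultrafilter is a maximal $\mathfrak{m}$-filter; $\mathfrak{m}^\beta$ is the set of all $\mathfrak{m}$-ultrafilters, topologized by the base $\{\widehat{A}:A\in\mathfrak{m}\}$ where $\widehat{A}=\{p\in\mathfrak{m}^\beta:A\in p\}$. Each $s\in S$ is identified with the principal ultrafilter $\{A\in\mathfrak{m}:s\in A\}$. The extended operation $*$ is the unique binary operation on $\mathfrak{m}^\beta$ extending $\cdot$ on $S$ such that $p\mapsto p*q$ is continuous for every $q\in\mathfrak{m}^\beta$ and $q\mapsto s*q$ is continuous for every $s\in S$. *)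

From Stdlib Require Import List.
Set Implicit Arguments.

Definition set (T : Type) := T -> Prop.

Definition is_sigma_algebra (T : Type) (m : set (set T)) : Prop :=
  m (fun _ => False) /\
  (forall A, m A -> m (fun x => ~ A x)) /\
  (forall F : nat -> set T, (forall n, m (F n)) -> m (fun x => exists n, F n x)).

Definition prod_sigma (T : Type) (m : set (set T)) : set (set (T * T)) :=
  fun E => forall M : set (set (T * T)), is_sigma_algebra M ->
    (forall A B, m A -> m B -> M (fun z => A (fst z) /\ B (snd z))) -> M E.

Definition finite_family (T : Type) (F : set (set T)) : Prop :=
  exists l : list (set T), forall A, F A -> In A l.

Definition measurable_semigroup (S : Type) (mul : S -> S -> S) (m : set (set S)) : Prop :=
  (forall x y z, mul (mul x y) z = mul x (mul y z)) /\
  is_sigma_algebra m /\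
  ~ finite_family m /\
  (forall l : list S, m (fun x => In x l)) /\
  (forall A, m A -> prod_sigma m (fun z => A (mul (fst z) (snd z)))).

Definition is_mfilter (S : Type) (m : set (set S)) (p : set (set S)) : Prop :=
  (forall A, p A -> m A) /\
  ~ p (fun _ => False) /\
  p (fun _ => True) /\
  (forall A B, p A -> m B -> (forall x, A x -> B x) -> p B) /\
  (forall A B, p A -> p B -> p (fun x => A x /\ B x)).

Definition is_multrafilter (S : Type) (m : set (set S)) (p : set (set S)) : Prop :=
  is_mfilter m p /\
  (forall q, is_mfilter m q -> (forall A, p A -> q A) -> forall A, q A -> p A).

Record ultra (S : Type) (m : set (set S)) := Ultra {
  uf :> set (set S);
  uf_ultra : is_multrafilter m uf }.

Definition ueq (S : Type) (m : set (set S)) (p q : ultra m) : Prop :=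
  forall A, uf p A <-> uf q A.

Definition is_principal (S : Type) (m : set (set S)) (p : ultra m) (s : S) : Prop :=
  forall A, uf p A <-> (m A /\ A s).

(* topology on m^beta generated by the base { hat A : A in m },
   hat A = { p | A in p } *)
Definition is_open (S : Type) (m : set (set S)) (U : set (ultra m)) : Prop :=
  forall p, U p -> exists A, m A /\ uf p A /\ (forall q : ultra m, uf q A -> U q).

Definition continuous (S : Type) (m : set (set S)) (f : ultra m -> ultra m) : Prop :=
  forall U, is_open U -> is_open (fun p => U (f p)).

Definition compact (S : Type) (m : set (set S)) : Prop :=
  forall (I : Type) (U : I -> set (ultra m)),
    (forall i, is_open (U i)) -> (forall p, exists i, U i p) ->
    exists l : list I, forall p, exists i, In i l /\ U i p.

Definition hausdorff (S : Type) (m : set (set S)) : Prop :=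
  forall p q : ultra m, ~ ueq p q ->
    exists U V : set (ultra m), is_open U /\ is_open V /\ U p /\ V q /\
      (forall r, ~ (U r /\ V r)).

(* op is "the extended operation": it extends mul on (principal ultrafilters of) S,
   p |-> op p q is continuous for every q, and q |-> op s q is continuous for s in S *)
Definition is_extended_op (S : Type) (mul : S -> S -> S) (m : set (set S))
    (op : ultra m -> ultra m -> ultra m) : Prop :=
  (forall s t (p q : ultra m), is_principal p s -> is_principal q t ->
      is_principal (op p q) (mul s t)) /\
  (forall q, continuous (fun p => op p q)) /\
  (forall s (p : ultra m), is_principal p s -> continuous (op p)).

Arguments is_extended_op {S} mul m op.
Arguments measurable_semigroup {S} mul m.
Arguments compact {S} m.
Arguments hausdorff {S} m.

(* Using that m is closed under complements and finite
     intersections, every m-ultrafilter contains exactly one of A and ~A, two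
     distinct ultrafilters are separated by some A in m, principal
     ultrafilters exist, and (by Zorn's lemma) every m-filter extends to an
     m-ultrafilter.
   - Topology.  Separation by A and ~A gives Hausdorffness; the extension
     lemma, applied to the filter of complements of finite unions of small
     basic sets, gives compactness.  Since every basic open set contains a
     principal ultrafilter, two continuous maps into a Hausdorff space that
     agree on principal ultrafilters agree everywhere ([continuous_ext]).
   - Associativity of the extended operation follows from that of S by
     three applications of [continuous_ext], freeing one variable at a time
     from principal to arbitrary, exactly as for the Stone–Čech compactification
     of a discrete semigroup. *)

From Stdlib Require Import List Classical FunctionalExtensionality PropExtensionality ProofIrrelevance.
From mathcomp Require classical_sets.
Set Implicit Arguments.
Unset Strict Implicit.

Lemma set_ext (T : Type) (A B : set T) : (forall x, A x <-> B x) -> A = B.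
Proof.
  intro H; apply functional_extensionality; intro x.
  apply propositional_extensionality; auto.
Qed.

Section SigmaAlgebra.
Variable S : Type.
Variable m : set (set S).
Hypothesis Hs : is_sigma_algebra m.

Lemma m_compl A : m A -> m (fun x => ~ A x).
Proof. destruct Hs as [_ [HC _]]; auto. Qed.

Lemma m_full : m (fun _ => True).
Proof.
  destruct Hs as [H0 _].
  replace (fun _ : S => True) with (fun x : S => ~ False) by (apply set_ext; tauto).
  exact (m_compl H0).
Qed.

(* A /\ B is the complement of the countable union ~A, ~B, ~B, ... *)
Lemma m_inter A B : m A -> m B -> m (fun x => A x /\ B x).
Proof.
  intros HA HB. destruct Hs as [_ [_ HU]].
  set (F := fun n : nat => match n with 0 => fun x => ~ A x | _ => fun x => ~ B x end).
  assert (HF : forall n, m (F n)) by (intros [|n]; apply m_compl; auto).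
  replace (fun x => A x /\ B x) with (fun x => ~ exists n, F n x).
  - exact (m_compl (HU _ HF)).
  - apply set_ext; intro x; split.
    + intro H; split; apply NNPP; intro Hn; apply H; [exists 0 | exists 1]; exact Hn.
    + intros [Ha Hb] [[|n] Hn]; auto.
Qed.

End SigmaAlgebra.

Section Ultrafilters.
Variable S : Type.
Variable m : set (set S).
Hypothesis Hs : is_sigma_algebra m.

Lemma u_m (p : ultra m) A : uf p A -> m A.
Proof. destruct (uf_ultra p) as [[H _] _]; auto. Qed.

Lemma u_full (p : ultra m) : uf p (fun _ => True).
Proof. destruct (uf_ultra p) as [[_ [_ [H _]]] _]; auto. Qed.

Lemma u_inter (p : ultra m) A B : uf p A -> uf p B -> uf p (fun x => A x /\ B x).
Proof. destruct (uf_ultra p) as [[_ [_ [_ [_ H]]]] _]; auto. Qed.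

Lemma u_nonempty (p : ultra m) A : uf p A -> exists x, A x.
Proof.
  intro H. apply NNPP; intro Hn.
  destruct (uf_ultra p) as [[_ [H0 _]] _]. apply H0.
  replace (fun _ : S => False) with A; auto.
  apply set_ext; intro x; split; [intro; apply Hn; eauto | tauto].
Qed.

Lemma u_not_both (p : ultra m) A : uf p A -> uf p (fun x => ~ A x) -> False.
Proof. intros H1 H2. destruct (u_nonempty (u_inter H1 H2)) as [x [a b]]; auto. Qed.

(* Ultrafilters are prime: if ~A is not in p, then the m-filter generated by
   p and A is proper and contains p, so by maximality it is p itself. *)
Lemma u_compl (p : ultra m) A : m A -> uf p A \/ uf p (fun x => ~ A x).
Proof.
  intro HA. destruct (classic (uf p (fun x => ~ A x))) as [H|H]; auto. left.
  destruct (uf_ultra p) as [Hf Hmax].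
  destruct Hf as [Hm [H0 [HT [Hsup Hint]]]].
  set (q := fun B => m B /\ exists C, uf p C /\ forall x, C x -> A x -> B x).
  assert (Hq : is_mfilter m q).
  { split; [|split; [|split; [|split]]].
    - intros B [? _]; auto.
    - intros [_ [C [HC HCA]]]. apply H, Hsup with C; auto. apply m_compl; auto.
    - split; [apply m_full; auto|]. exists (fun _ => True); auto.
    - intros B D [HB [C [HC HCB]]] HD HBD. split; auto. exists C; auto.
    - intros B D [HB [C [HC HCB]]] [HD [C' [HC' HCD]]].
      split; [apply m_inter; auto|].
      exists (fun x => C x /\ C' x); split; auto. intros x [] ?; split; auto. }
  apply (Hmax q Hq).
  - intros B HB; split; auto. exists B; auto.
  - split; auto. exists (fun _ => True); auto.
Qed.

Lemma ueq_eq (p q : ultra m) : ueq p q -> p = q.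
Proof.
  intro H. destruct p as [p Hp], q as [q Hq]; unfold ueq in H; simpl in H.
  assert (p = q) by (apply set_ext; auto). subst q.
  f_equal; apply proof_irrelevance.
Qed.

Lemma u_separate (p q : ultra m) : p <> q ->
  exists A, m A /\ uf p A /\ uf q (fun x => ~ A x).
Proof.
  intro Hne. apply NNPP; intro Hn.
  assert (Hpq : forall A, uf p A -> uf q A).
  { intros A HA. destruct (u_compl q (u_m HA)) as [|HnA]; auto.
    exfalso; apply Hn; exists A; split; [exact (u_m HA) | auto]. }
  apply Hne, ueq_eq; intro A; split; auto.
  destruct (uf_ultra p) as [_ Hmax]. apply Hmax.
  destruct (uf_ultra q); auto. exact Hpq.
Qed.

Lemma principal_exists (s : S) : exists p : ultra m, is_principal p s.
Proof.
  assert (Hu : is_multrafilter m (fun A => m A /\ A s)).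
  { split.
    - split; [|split; [|split; [|split]]].
      + intros A []; auto.
      + intros [_ F]; auto.
      + split; auto; apply m_full; auto.
      + intros A B [] ? ?; split; auto.
      + intros A B [] []; split; auto. apply m_inter; auto.
    - intros q [Hm [H0 [HT [Hsup Hint]]]] Hpq A HA. split; auto.
      apply NNPP; intro Hn. apply H0.
      replace (fun _ : S => False) with (fun x => A x /\ ~ A x) by (apply set_ext; tauto).
      apply Hint; auto. apply Hpq. split; auto. apply m_compl; auto. }
  exists (Ultra Hu). intro A; simpl; tauto.
Qed.

Lemma principal_unique (p q : ultra m) s : is_principal p s -> is_principal q s -> p = q.
Proof. intros H1 H2; apply ueq_eq; intro A; rewrite (H1 A), (H2 A); tauto. Qed.

Lemma u_prime (p : ultra m) (l : list (set S)) (B : set S) :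
  (forall A, In A l -> m A) -> uf p B -> (forall x, B x -> exists A, In A l /\ A x) ->
  exists A, In A l /\ uf p A.
Proof.
  revert B; induction l as [|a l IH]; intros B Hm HB Hcov.
  - destruct (u_nonempty HB) as [x Hx]. destruct (Hcov x Hx) as [A [[] _]].
  - destruct (u_compl p (Hm a (or_introl eq_refl))) as [Ha|Hna].
    + exists a; split; simpl; auto.
    + destruct (IH _ (fun A HA => Hm A (or_intror HA)) (u_inter HB Hna)) as [A [HA HpA]].
      * intros x [Bx nax]. destruct (Hcov x Bx) as [A [[<-|HA] Ax]]; [tauto | eauto].
      * exists A; split; simpl; auto.
Qed.

(* Every m-filter extends to an m-ultrafilter (Zorn's lemma).  The chains are
   taken among families that are empty or are m-filters containing F, so that
   the union of the empty chain is admissible. *)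
Lemma uf_extend (F : set (set S)) : is_mfilter m F -> exists p : ultra m, forall A, F A -> uf p A.
Proof.
  intro HF. assert (HT : F (fun _ => True)) by (destruct HF as [_ [_ [HT _]]]; auto).
  set (P := fun q : set (set S) => (forall A, ~ q A) \/ (is_mfilter m q /\ forall A, F A -> q A)).
  assert (HPfilter : forall q A, P q -> q A -> is_mfilter m q /\ forall A, F A -> q A).
  { intros q A [H|H] HA; auto. exfalso; exact (H _ HA). }
  destruct (@classical_sets.Zorn_bigcup (set S) P) as [Q [HPQ HQmax]].
  - intros G HGP Htot. unfold classical_sets.bigcup.
    destruct (classic (exists X A, G X /\ X A)) as [[X0 [A0 [HX0 HA0]]]|Hno].
    2: { left. intros A [X HX HA]. apply Hno; eauto. }
    right.
    assert (HG : forall X A, G X -> X A -> is_mfilter m X /\ forall A, F A -> X A)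
      by (intros X A HX; apply HPfilter, HGP, HX).
    destruct (HG X0 A0 HX0 HA0) as [_ HFX0].
    split; [split; [|split; [|split; [|split]]]|].
    + intros A [X HX HA]. destruct (HG X A HX HA) as [[Hm _] _]; auto.
    + intros [X HX HA]. destruct (HG X _ HX HA) as [[_ [H0 _]] _]; auto.
    + exists X0; auto.
    + intros A B [X HX HA] HB HAB. exists X; auto.
      destruct (HG X A HX HA) as [[_ [_ [_ [Hsup _]]]] _]; eauto.
    + intros A B [X HX HA] [Y HY HB].
      destruct (Htot X Y HX HY) as [HXY|HYX].
      * exists Y; auto. destruct (HG Y B HY HB) as [[_ [_ [_ [_ Hint]]]] _]; auto.
      * exists X; auto. destruct (HG X A HX HA) as [[_ [_ [_ [_ Hint]]]] _]; auto.
    + intros A HA. exists X0; auto.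
  - destruct HPQ as [HQe|[HQf HFQ]].
    + exfalso. apply (HQmax F); [|right; split; auto].
      split; [intros A HA; exfalso; exact (HQe _ HA)|].
      intro H. exact (HQe _ (H _ HT)).
    + assert (Hu : is_multrafilter m Q).
      { split; auto. intros q Hq HQq A HqA. apply NNPP; intro HnA.
        apply (HQmax q); [|right; split; auto].
        split; [exact HQq|]. intro H. exact (HnA (H _ HqA)). }
      exists (Ultra Hu). simpl; auto.
Qed.

End Ultrafilters.

Section Topology.
Variable S : Type.
Variable m : set (set S).
Hypothesis Hs : is_sigma_algebra m.

Lemma hat_open A : m A -> is_open (fun r : ultra m => uf r A).
Proof. intros HA p Hp; exists A; auto. Qed.

Lemma continuous_comp (f g : ultra m -> ultra m) :
  continuous f -> continuous g -> continuous (fun p => f (g p)).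
Proof. intros Hf Hg U HU. exact (Hg _ (Hf _ HU)). Qed.

(* Principal ultrafilters are dense: two continuous maps agreeing on them
   agree everywhere, since the target is Hausdorff. *)
Lemma continuous_ext (f g : ultra m -> ultra m) : continuous f -> continuous g ->
  (forall s (p : ultra m), is_principal p s -> f p = g p) -> forall p, f p = g p.
Proof.
  intros Hf Hg Hfg p. apply NNPP; intro Hne.
  destruct (u_separate Hs Hne) as [A [HA [H1 H2]]].
  destruct (Hf _ (hat_open HA) p H1) as [B [_ [HpB HBf]]].
  destruct (Hg _ (hat_open (m_compl Hs HA)) p H2) as [C [_ [HpC HCg]]].
  destruct (u_nonempty (u_inter HpB HpC)) as [x [Bx Cx]].
  destruct (principal_exists Hs x) as [px Hpx].
  assert (HfA : uf (f px) A) by (apply HBf, Hpx; split; [exact (u_m HpB) | auto]).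
  assert (HgA : uf (g px) (fun y => ~ A y)) by (apply HCg, Hpx; split; [exact (u_m HpC) | auto]).
  rewrite (Hfg x px Hpx) in HfA. exact (u_not_both HfA HgA).
Qed.

Lemma hausdorff_ultra : hausdorff m.
Proof.
  intros p q Hn. assert (Hne : p <> q) by (intro; subst; apply Hn; intro; tauto).
  destruct (u_separate Hs Hne) as [A [HA [H1 H2]]].
  exists (fun r : ultra m => uf r A), (fun r : ultra m => uf r (fun x => ~ A x)).
  split; [exact (hat_open HA)|]. split; [exact (hat_open (m_compl Hs HA))|].
  split; [exact H1|]. split; [exact H2|].
  intros r [a b]. exact (u_not_both a b).
Qed.

Lemma choose_list (I T : Type) (P : T -> I -> Prop) (l : list T) :
  (forall A, In A l -> exists i, P A i) -> exists li, forall A, In A l -> exists i, In i li /\ P A i.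
Proof.
  induction l as [|a l IH]; intro H.
  - exists nil; intros A [].
  - destruct (H a (or_introl eq_refl)) as [i Hi].
    destruct IH as [li Hli]; [intros; apply H; right; auto|].
    exists (i :: li). intros A [<-|HA]; [exists i; split; simpl; auto|].
    destruct (Hli A HA) as [j [? ?]]; exists j; split; simpl; auto.
Qed.

Definition cofinite_filter (C : set (set S)) : set (set S) :=
  fun B => m B /\ exists l, (forall A, In A l -> C A) /\
                   (forall x, (forall A, In A l -> ~ A x) -> B x).

Lemma cofinite_filter_mfilter (C : set (set S)) :
  ~ (exists l, (forall A, In A l -> C A) /\ forall x, exists A, In A l /\ A x) ->
  is_mfilter m (cofinite_filter C).
Proof.
  intro Hnocover. split; [|split; [|split; [|split]]].
  - intros A [? _]; auto.
  - intros [_ [l [HlC Hl]]]. apply Hnocover. exists l; split; auto.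
    intro x. apply NNPP; intro Hn. apply (Hl x). intros A HA Ax; apply Hn; eauto.
  - split; [apply m_full; auto|]. exists nil; split; [intros A []|auto].
  - intros A B [HA [l [HlC Hl]]] HB HAB. split; auto. exists l; auto.
  - intros A B [HA [l1 [HlC1 Hl1]]] [HB [l2 [HlC2 Hl2]]]. split; [apply m_inter; auto|].
    exists (l1 ++ l2); split.
    + intros A' HA'. apply in_app_or in HA'. destruct HA'; auto.
    + intros x Hx. split; [apply Hl1 | apply Hl2]; intros A' HA'; apply Hx, in_or_app; auto.
Qed.

(* Compactness: if an open cover has no finite subcover, then no finite
   family of basic sets subordinate to the cover covers S (by primality), so
   the complements of such sets generate a proper m-filter; an ultrafilter
   extending it lies in no member of the cover. *)
Lemma compact_ultra : compact m.
Proof.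
  intros I U HUo Hcov. apply NNPP; intro Hno.
  set (C := fun A => m A /\ exists i, forall q : ultra m, uf q A -> U i q).
  assert (Hnocover : ~ (exists l, (forall A, In A l -> C A) /\ forall x, exists A, In A l /\ A x)).
  { intros [l [HlC Hl]]. apply Hno.
    destruct (@choose_list I (set S) (fun A i => forall q : ultra m, uf q A -> U i q) l) as [li Hli].
    { intros A HA. apply (HlC A HA). }
    exists li. intro p.
    destruct (u_prime Hs (fun A HA => proj1 (HlC A HA)) (u_full p) (fun x _ => Hl x)) as [A [HA HpA]].
    destruct (Hli A HA) as [i [Hi HUi]]. exists i; auto. }
  destruct (uf_extend (cofinite_filter_mfilter Hnocover)) as [p Hp].
  destruct (Hcov p) as [i Hi].
  destruct (HUo i p Hi) as [A [HA [HpA HAU]]].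
  apply (u_not_both HpA), Hp. split; [apply m_compl; auto|].
  exists (A :: nil). split.
  - intros A' [<-|[]]. split; eauto.
  - intros x Hx. apply Hx; simpl; auto.
Qed.

End Topology.

Lemma extended_op_assoc (S : Type) (mul : S -> S -> S) (m : set (set S))
  (Hms : measurable_semigroup mul m)
  (op : ultra m -> ultra m -> ultra m) (Hop : is_extended_op mul m op) :
  forall p q r : ultra m, op (op p q) r = op p (op q r).
Proof.
  destruct Hms as [Hassoc [Hs _]]. destruct Hop as [Hpr [Hl Hr]].
  (* p, q principal: both sides are continuous in r and agree on S. *)
  assert (Hassoc_pp : forall s t (ps pt : ultra m), is_principal ps s -> is_principal pt t ->
            forall r, op (op ps pt) r = op ps (op pt r)).
  { intros s t ps pt Hps Hpt.
    apply (continuous_ext Hs (f := fun r => op (op ps pt) r) (g := fun r => op ps (op pt r))).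
    - apply (Hr (mul s t)), Hpr; auto.
    - apply continuous_comp; eauto.
    - intros u pu Hpu. apply principal_unique with (mul (mul s t) u).
      + apply Hpr; auto.
      + rewrite Hassoc. apply Hpr; auto. }
  (* p principal: both sides are continuous in q. *)
  assert (Hassoc_p : forall s (ps : ultra m), is_principal ps s ->
            forall q r, op (op ps q) r = op ps (op q r)).
  { intros s ps Hps q r. revert q.
    apply (continuous_ext Hs (f := fun q => op (op ps q) r) (g := fun q => op ps (op q r))).
    - apply (continuous_comp (f := fun p => op p r) (g := op ps)); eauto.
    - apply (continuous_comp (f := op ps) (g := fun q => op q r)); eauto.
    - intros t pt Hpt. eapply Hassoc_pp; eauto. }
  (* general case: both sides are continuous in p. *)
  intros p q r. revert p.
  apply (continuous_ext Hs (f := fun p => op (op p q) r) (g := fun p => op p (op q r))).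
  - apply (continuous_comp (f := fun p => op p r) (g := fun p => op p q)); eauto.
  - apply Hl.
  - intros s ps Hps; eapply Hassoc_p; eauto.
Qed.

Unset Implicit Arguments.
Set Strict Implicit.

Theorem mainTheorem13 (S : Type) (mul : S -> S -> S) (m : set (set S))
  (Hms : measurable_semigroup mul m)
  (op : ultra m -> ultra m -> ultra m) (Hop : is_extended_op mul m op) :
  (forall p q r : ultra m, ueq (op (op p q) r) (op p (op q r))) /\
  compact m /\ hausdorff m /\
  (forall q : ultra m, continuous (fun p => op p q)).
Proof.
  assert (Hs : is_sigma_algebra m) by (destruct Hms as [_ [Hs _]]; exact Hs).
  split; [|split; [|split]].
  - intros p q r. rewrite (extended_op_assoc Hms Hop). intro; tauto.
  - exact (compact_ultra Hs).
  - exact (hausdorff_ultra Hs).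
  - destruct Hop as [_ [Hl _]]; exact Hl.
Qed.
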